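(* Consider a stochastic $K$-armed bandit ($K\ge2$): at each round $t$ a reward vector $\mathbf R_t\in[-R_{\max},R_{\max}]^K$ is drawn i.i.d. from a fixed distribution with mean $\mathbf r$, where $r(a)\ne r(a')$ for $a\neq a'$; let $\Delta=\min_{a\ne a'}|r(a)-r(a')|$. Let $\eta>0$, $\alpha>0$, and run LB-SGB: starting from $\boldsymbol\theta_1=\mathbf 0$, at round $t$ sample $a_t\sim\pi_{\boldsymbol\theta_t}$ (softmax policy), observe $R_t(a_t)$, form $\hat r_t(a)=\mathbb I\{a_t=a\}R_t(a_t)/\pi_{\boldsymbol\theta_t}(a)$ and the stochastic gradient $$\widehat\nabla\Phi_\eta(\boldsymbol\theta_t)=(\mathrm{diag}(\pi_{\boldsymbol\theta_t})-\pi_{\boldsymbol\theta_t}\pi_{\boldsymbol\theta_t}^\top)\hat{\mathbf r}_t+\frac1\eta(\mathbf 1-K\pi_{\boldsymbol\theta_t}),$$ and update $\boldsymbol\theta_{t+1}=\boldsymbol\theta_t+\alpha\widehat\nabla\Phi_\eta(\boldsymbol\theta_t)$. Let $\Phi_\eta(\boldsymbol\theta)=\pi_{\boldsymbol\theta}^\top\mathbf r+\frac1\eta\sum_a\log\pi_{\boldsymbol\theta}(a)$. Then for all $t\ge1$, $$\mathbb E_t\big[\|\widehat\nabla\Phi_\eta(\boldsymbol\theta_t)\|_2^2\big]\le\frac{16R_{\max}^3K^{3/2}}{\Delta^2}\|\nabla\Phi_\eta(\boldsymbol\theta_t)\|_2+b(\eta),\qquad b(\eta)=\frac{2K}{\eta}\Big(\frac{4K}{\eta}+\frac{16R_{\max}^3K^{3/2}}{\Delta^2}\Big),$$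 where $\mathbb E_t$ is the expectation over the round-$t$ randomness ($a_t$ and $\mathbf R_t$) conditional on the past.
   Context: Softmax policy: $\pi_{\boldsymbol\theta}(a)=e^{\theta(a)}/\sum_b e^{\theta(b)}$. $\mathbf 1$ is the all-ones vector. *)

From HB Require Import structures.
From mathcomp Require Import all_boot all_order all_algebra.
From mathcomp Require Import all_classical all_reals all_analysis.
Set Implicit Arguments. Unset Strict Implicit. Unset Printing Implicit Defensive.
Import Order.TTheory GRing.Theory Num.Theory.
Import numFieldNormedType.Exports.
Local Open Scope ring_scope.

Section LBSGB.
Variables (R : realType) (K : nat).

Definition softmax (th : 'cV[R]_K) : 'cV[R]_K :=
  \col_a (expR (th a 0) / \sum_b expR (th b 0)).

Definition l2norm (v : 'cV[R]_K) : R := Num.sqrt (\sum_i v i 0 ^+ 2).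

Definition rhat (th : 'cV[R]_K) (a : 'I_K) (x : R) : 'cV[R]_K :=
  \col_b (if b == a then x / softmax th b 0 else 0).

Definition grad_hat (eta : R) (th : 'cV[R]_K) (a : 'I_K) (x : R) : 'cV[R]_K :=
  let p := softmax th in
  (diag_mx p^T - p *m p^T) *m rhat th a x
  + eta^-1 *: (const_mx 1 - K%:R *: p).

Definition lbsgb_step (eta alpha : R) (th : 'cV[R]_K) (a : 'I_K) (x : R) :=
  th + alpha *: grad_hat eta th a x.

Definition Phi (eta : R) (r : 'cV[R]_K) (th : 'cV[R]_K) : R :=
  ((softmax th)^T *m r) 0 0 + eta^-1 * \sum_a ln (softmax th a 0).

Definition gradPhi (eta : R) (r : 'cV[R]_K) (th : 'cV[R]_K) : 'cV[R]_K :=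
  \col_i ('D_(delta_mx i 0 : 'cV[R]_K) (Phi eta r) th).

(* LB-SGB iterate theta_t after the history (a_1,w_1),...,(a_{t-1},w_{t-1}),
   where w_s is the round-s sample outcome and Rw a w the reward of arm a;
   starts from theta_1 = 0. *)
Definition lbsgb_iterate (T : Type) (eta alpha : R) (Rw : 'I_K -> T -> R)
  (hist : seq ('I_K * T)) : 'cV[R]_K :=
  foldl (fun th p => lbsgb_step eta alpha th p.1 (Rw p.1 p.2)) 0 hist.

End LBSGB.

From HB Require Import structures.
From mathcomp Require Import all_boot all_order all_algebra.
From mathcomp Require Import all_classical all_reals all_analysis.
From mathcomp Require Import ring lra.
Import Order.TTheory GRing.Theory Num.Theory.
Import numFieldNormedType.Exports.
Local Open Scope ring_scope.
Set Implicit Arguments. Unset Strict Implicit. Unset Printing Implicit Defensive.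

(* Write pi for the softmax policy at theta.  When arm a is played with a reward x,
   |x| <= Rmax, the stochastic gradient has coordinates
   x ((b == a) - pi b) + (1 - K pi b) / eta, so its squared norm is at most
   2 Rmax^2 (1 - pi a) plus terms of order K / eta.  Averaging over a ~ pi leaves
   Q = sum_a pi a (1 - pi a), the probability that two independent draws differ.
   As distinct arms have rewards at least Delta apart, Q Delta is at most twice the
   mean absolute deviation sum_a pi a |r a - pi^T r|, and each of its terms is, up
   to (1 - K pi a) / eta, a coordinate of the exact gradient
   pi a (r a - pi^T r) + (1 - K pi a) / eta.  The bound holds at every theta, not
   only at the LB-SGB iterates. *)

Lemma lbsgb_constant_bound (R : realFieldType) (Rmax Delta C G Q k n : R) :
  2 <= n -> 0 < Delta -> Delta <= 2 * Rmax -> 0 <= G -> 0 <= k ->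
  16 * Rmax ^+ 3 * n / Delta ^+ 2 <= C -> Q * Delta <= 2 * n * (G + k) ->
  2 * Rmax ^+ 2 * Q + 4 * Rmax * k + 2 * k ^+ 2 <= C * G + 2 * k * (4 * k + C).
Proof.
move=> n2 D0 DR G0 k0 hC hQ.
have R0 : 0 < Rmax by lra.
have C0 : 0 <= C by apply: le_trans hC; rewrite divr_ge0 ?mulr_ge0 ?exprn_ge0 //; lra.
have CD2 : 16 * Rmax ^+ 3 * n <= C * Delta ^+ 2.
  by rewrite -ler_pdivrMr ?exprn_gt0.
(* Delta <= 2 Rmax trades powers of Delta in the denominator for powers of Rmax. *)
have CD : 8 * Rmax ^+ 2 * n <= C * Delta.
  rewrite -(ler_pM2r (_ : 0 < 2 * Rmax)); last lra.
  have : C * Delta * Delta <= C * Delta * (2 * Rmax) by rewrite ler_wpM2l ?mulr_ge0 //; lra.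
  lra.
have C4 : 4 * Rmax * n <= C.
  rewrite -(ler_pM2r (_ : 0 < 2 * Rmax)); last lra.
  have : C * Delta <= C * (2 * Rmax) by rewrite ler_wpM2l.
  lra.
have hQR : 2 * Rmax ^+ 2 * Q <= C / 2 * (G + k).
  rewrite -(ler_pM2r D0).
  have : 2 * Rmax ^+ 2 * (Q * Delta) <= 2 * Rmax ^+ 2 * (2 * n * (G + k)).
    by rewrite ler_wpM2l // mulr_ge0 // sqr_ge0.
  have : 8 * Rmax ^+ 2 * n * (G + k) <= C * Delta * (G + k).
    by rewrite ler_wpM2r //; lra.
  lra.
have hRk : 4 * Rmax * k <= C / 2 * k.
  rewrite ler_wpM2r //; have : 8 * Rmax <= 4 * Rmax * n by nra.
  lra.
have : 0 <= C * G by rewrite mulr_ge0.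
have : 0 <= C * k by rewrite mulr_ge0.
have : 0 <= k ^+ 2 by rewrite sqr_ge0.
lra.
Qed.

Section ProbabilityVector.
Variables (R : realFieldType) (K : nat) (p : 'I_K -> R).
Hypotheses (p_ge0 : forall a, 0 <= p a) (p_sum1 : \sum_a p a = 1).

Lemma prob_le1 a : p a <= 1.
Proof. by rewrite -p_sum1 (bigD1 a) //= lerDl sumr_ge0. Qed.

Lemma sum_prob_neq a : \sum_(b | b != a) p b = 1 - p a.
Proof. by rewrite -p_sum1 [in RHS](bigD1 a) //= [p a + _]addrC addrK. Qed.

Lemma norm_indicator_subr_le1 a b : `|(b == a)%:R - p b| <= 1.
Proof.
have := prob_le1 b; have := p_ge0 b.
by case: eqP => _ /=; rewrite ler_norml; lra.
Qed.

Lemma sum_norm_indicator_subr a : \sum_b `|(b == a)%:R - p b| = 2 * (1 - p a).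
Proof.
rewrite (bigD1 a) //= eqxx ger0_norm ?subr_ge0 ?prob_le1 //.
under eq_bigr => b /negbTE -> do rewrite sub0r normrN ger0_norm //.
by rewrite sum_prob_neq /=; ring.
Qed.

Lemma sum_sqr_indicator_subr_le a :
  \sum_b ((b == a)%:R - p b) ^+ 2 <= 2 * (1 - p a).
Proof.
rewrite -sum_norm_indicator_subr; apply: ler_sum => b _.
have := norm_indicator_subr_le1 a b; have := normr_ge0 ((b == a)%:R - p b).
rewrite -real_normK ?num_real //; nra.
Qed.

Lemma norm_1_subKp_le b : `|1 - K%:R * p b| <= K%:R.
Proof.
have K1 : 1 <= K%:R :> R by rewrite ler1n (leq_ltn_trans (leq0n b)).
have := prob_le1 b; have := p_ge0 b.
rewrite ler_norml; nra.
Qed.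

Lemma sum_sqr_1_subKp_le : \sum_b (1 - K%:R * p b) ^+ 2 <= 2 * K%:R ^+ 2.
Proof.
apply: (@le_trans _ _ (\sum_b (1 + K%:R ^+ 2 * p b))).
  apply: ler_sum => b _.
  have : 0 <= K%:R * p b by rewrite mulr_ge0.
  have : 0 <= K%:R ^+ 2 * (p b * (1 - p b)) by rewrite !mulr_ge0 ?subr_ge0 ?prob_le1.
  nra.
rewrite big_split /= sumr_const card_ord -mulr_sumr p_sum1 mulr1.
have : K%:R <= K%:R ^+ 2 :> R.
  by rewrite -natrX ler_nat; case: (K) => // n; rewrite leq_pmulr.
lra.
Qed.

Lemma sum_sum_mul_addr (A B : 'I_K -> R) :
  \sum_a \sum_b p a * p b * (A a + B b) = \sum_a p a * A a + \sum_b p b * B b.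
Proof.
under eq_bigr => a _.
  rewrite (eq_bigr (fun b => p a * A a * p b + p a * (p b * B b))); last first.
    by move=> b _; ring.
  rewrite big_split /= -mulr_sumr p_sum1 mulr1 -mulr_sumr.
over.
by rewrite big_split /= -mulr_suml p_sum1 mul1r.
Qed.

Lemma gini_le_mean_abs_dev (r : 'I_K -> R) (Delta : R) :
  (forall a b, a != b -> Delta <= `|r a - r b|) ->
  (\sum_a p a * (1 - p a)) * Delta
    <= 2 * \sum_a p a * `|r a - \sum_b p b * r b|.
Proof.
move=> sep; set rbar := \sum_b p b * r b.
have -> : (\sum_a p a * (1 - p a)) * Delta
          = \sum_a \sum_(b | b != a) p a * p b * Delta.
  rewrite mulr_suml; apply: eq_bigr => a _.
  by rewrite -sum_prob_neq mulr_sumr mulr_suml; apply: eq_bigr => b _; ring.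
apply: (@le_trans _ _ (\sum_a \sum_b p a * p b * `|r a - r b|)).
  apply: ler_sum => a _.
  rewrite [leRHS](bigD1 a) //= subrr normr0 mulr0 add0r.
  by apply: ler_sum => b ba; rewrite ler_wpM2l ?mulr_ge0 // sep // eq_sym.
apply: (@le_trans _ _ (\sum_a \sum_b p a * p b * (`|r a - rbar| + `|r b - rbar|))).
  apply: ler_sum => a _; apply: ler_sum => b _.
  by rewrite ler_wpM2l ?mulr_ge0 // (distrC (r b)) ler_distD.
by rewrite sum_sum_mul_addr mulr2n mulrDl mul1r.
Qed.

Lemma sum_sqr_stoch_grad_le (eta Rmax x : R) a : 0 < eta -> `|x| <= Rmax ->
  \sum_b (x * ((b == a)%:R - p b) + eta^-1 * (1 - K%:R * p b)) ^+ 2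
    <= 2 * Rmax ^+ 2 * (1 - p a) + 4 * Rmax * K%:R / eta
       + 2 * K%:R ^+ 2 / eta ^+ 2.
Proof.
move=> eta_gt0 xR.
pose u b := (b == a)%:R - p b; pose v b := 1 - K%:R * p b.
rewrite -/(\sum_b (x * u b + eta^-1 * v b) ^+ 2).
have Rmax_ge0 : 0 <= Rmax := le_trans (normr_ge0 x) xR.
have ieta_ge0 : 0 <= eta^-1 by rewrite invr_ge0 (ltW eta_gt0).
have -> : \sum_b (x * u b + eta^-1 * v b) ^+ 2 = x ^+ 2 * \sum_b u b ^+ 2
    + 2 * eta^-1 * \sum_b x * u b * v b + eta^-1 ^+ 2 * \sum_b v b ^+ 2.
  rewrite !mulr_sumr -!big_split /=; apply: eq_bigr => b _; ring.
apply: lerD; first apply: lerD.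
- rewrite [leRHS](_ : _ = Rmax ^+ 2 * (2 * (1 - p a))); last by ring.
  apply: ler_pM; rewrite ?sqr_ge0 ?sum_sqr_indicator_subr_le //.
    by apply: sumr_ge0 => b _; exact: sqr_ge0.
  by rewrite -real_normK ?num_real // lerXn2r // nnegrE.
- rewrite [leRHS](_ : _ = 2 / eta * (2 * Rmax * K%:R)); last by ring.
  rewrite ler_wpM2l ?mulr_ge0 //.
  apply: (@le_trans _ _ (\sum_b Rmax * K%:R * `|u b|)).
    apply: ler_sum => b _; apply: le_trans (ler_norm _) _.
    rewrite !normrM -mulrA [`|u b| * _]mulrC mulrA ler_pM ?mulr_ge0 //.
    by rewrite ler_pM ?norm_1_subKp_le.
  rewrite -mulr_sumr sum_norm_indicator_subr.
  have := prob_le1 a; have := p_ge0 a; have : 0 <= Rmax * K%:R by rewrite mulr_ge0.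
  nra.
- by rewrite mulrC exprVn ler_wpM2r ?sum_sqr_1_subKp_le // invr_ge0 sqr_ge0.
Qed.

Lemma mean_abs_dev_le_grad (r : 'I_K -> R) (eta G : R) : 0 < eta ->
  (forall a, `|p a * (r a - \sum_b p b * r b) + eta^-1 * (1 - K%:R * p a)| <= G) ->
  \sum_a p a * `|r a - \sum_b p b * r b| <= K%:R * (G + K%:R / eta).
Proof.
move=> eta_gt0 gG; set rbar := \sum_b p b * r b.
rewrite [leRHS](_ : _ = \sum_(a < K) (G + K%:R / eta)); last first.
  by rewrite sumr_const card_ord mulr_natl.
apply: ler_sum => a _.
rewrite -[leLHS]ger0_norm ?mulr_ge0 // normrM normr_id -normrM.
rewrite -(addrK (eta^-1 * (1 - K%:R * p a)) (p a * (r a - rbar))).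
apply: le_trans (ler_normB _ _) _; apply: lerD; first exact: gG.
rewrite normrM gtr0_norm ?invr_gt0 // mulrC ler_wpM2r ?norm_1_subKp_le //.
by rewrite invr_ge0 (ltW eta_gt0).
Qed.

Lemma mean_sqr_stoch_grad_le (r : 'I_K -> R) (Rmax Delta eta G C : R) :
  (2 <= K)%N -> 0 < eta -> 0 < Delta -> Delta <= 2 * Rmax ->
  (forall a b, a != b -> Delta <= `|r a - r b|) ->
  (forall a, `|p a * (r a - \sum_b p b * r b) + eta^-1 * (1 - K%:R * p a)| <= G) ->
  16 * Rmax ^+ 3 * K%:R / Delta ^+ 2 <= C ->
  \sum_a p a * (2 * Rmax ^+ 2 * (1 - p a) + 4 * Rmax * K%:R / eta
                + 2 * K%:R ^+ 2 / eta ^+ 2)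
    <= C * G + 2 * K%:R / eta * (4 * K%:R / eta + C).
Proof.
move=> K2 eta_gt0 D_gt0 DR sep gG hC.
have G_ge0 : 0 <= G := le_trans (normr_ge0 _) (gG (Ordinal (ltnW K2))).
have gini_ge0 : 0 <= \sum_a p a * (1 - p a).
  by apply: sumr_ge0 => a _; rewrite mulr_ge0 ?subr_ge0 ?prob_le1.
have kappa_ge0 : 0 <= K%:R / eta by rewrite divr_ge0 // (ltW eta_gt0).
have -> : \sum_a p a * (2 * Rmax ^+ 2 * (1 - p a) + 4 * Rmax * K%:R / eta
                         + 2 * K%:R ^+ 2 / eta ^+ 2)
          = 2 * Rmax ^+ 2 * \sum_a p a * (1 - p a)
            + 4 * Rmax * (K%:R / eta) + 2 * (K%:R / eta) ^+ 2.
  transitivity (2 * Rmax ^+ 2 * \sum_a p a * (1 - p a)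
      + (4 * Rmax * K%:R / eta + 2 * K%:R ^+ 2 / eta ^+ 2) * \sum_a p a).
    by rewrite !mulr_sumr -big_split; apply: eq_bigr => a _ /=; ring.
  by rewrite p_sum1 mulr1 expr_div_n; ring.
have -> : 2 * K%:R / eta * (4 * K%:R / eta + C)
          = 2 * (K%:R / eta) * (4 * (K%:R / eta) + C) by ring.
apply: (lbsgb_constant_bound (Delta := Delta) (n := K%:R)) => //.
  by rewrite (ler_nat R 2).
apply: le_trans (gini_le_mean_abs_dev sep) _.
by rewrite -mulrA ler_wpM2l // mean_abs_dev_le_grad.
Qed.

End ProbabilityVector.

Lemma sum_mul_indicator (R : pzSemiRingType) n (F : 'I_n -> R) i :
  \sum_j F j * (j == i)%:R = F i.
Proof.
by rewrite (bigD1 i) //= eqxx mulr1 big1 ?addr0 // => j /negbTE ->; rewrite mulr0.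
Qed.

Lemma derive_along_line (R : numFieldType) (V W : normedModType R)
    (f : V -> W) (a v : V) (l : W) :
  is_derive (0 : R) 1 (fun h : R => f (h *: v + a)) l -> 'D_v f a = l.
Proof.
move=> fl; rewrite -(@derive_val _ _ _ _ _ _ _ fl) /derive.
congr (lim (_ @ 0^')%classic).
by apply/funext => h /=; rewrite scale0r add0r addr0 [h%:A]mulr1.
Qed.

Lemma is_derive_expR_affine (R : realType) (x c t : R) :
  is_derive x 1 (fun h => expR (h * c + t)) (expR (x * c + t) * c).
Proof.
apply: (is_derive1_comp (f := expR) (g := fun h => h * c + t)).
apply: is_derive_eq (is_deriveD (is_deriveM (is_derive_id x 1) (is_derive_cst c x 1))
                                (is_derive_cst t x 1)) _.
by rewrite scaler0 add0r addr0 [_%:A]mulr1.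
Qed.

Lemma is_derive_sum_fun (R : numFieldType) (V W : normedModType R) n
    (F : 'I_n -> V -> W) (dF : 'I_n -> W) (x v : V) :
  (forall j, is_derive x v (F j) (dF j)) ->
  is_derive x v (fun y => \sum_j F j y) (\sum_j dF j).
Proof. by move=> /is_derive_sum; rewrite fct_sumE. Qed.

Section Softmax.
Variables (R : realType) (K : nat).
Implicit Types (th : 'cV[R]_K) (a b i : 'I_K).

Lemma sum_expR_gt0 th a : 0 < \sum_b expR (th b 0).
Proof.
by rewrite (bigD1 a) //= ltr_pwDl ?expR_gt0 // sumr_ge0 // => b _; exact/ltW/expR_gt0.
Qed.

Lemma softmax_gt0 th a : 0 < softmax th a 0.
Proof. by rewrite mxE divr_gt0 ?expR_gt0 ?(sum_expR_gt0 th a). Qed.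

Lemma softmax_sum1 th a : \sum_b softmax th b 0 = 1.
Proof.
under eq_bigr => b _ do rewrite mxE.
by rewrite -mulr_suml mulfV // gt_eqF // (sum_expR_gt0 th a).
Qed.

Lemma grad_hat_entry eta th a x b :
  grad_hat eta th a x b 0 = x * ((b == a)%:R - softmax th b 0)
                            + eta^-1 * (1 - K%:R * softmax th b 0).
Proof.
rewrite mxE [X in X + _]mxE [X in _ + X]mxE; congr (_ + _); last by rewrite !mxE.
rewrite (bigD1 a) //= big1 ?addr0 => [|c /negbTE ca]; last by rewrite !mxE ca mulr0.
rewrite !mxE eqxx big_ord1 !mxE.
have := sum_expR_gt0 th a; have := expR_gt0 (th a 0).
by case: eqP => [->|_] /= pa Z; field; rewrite !gt_eqF.
Qed.

Lemma l2norm_sqr (v : 'cV[R]_K) : l2norm v ^+ 2 = \sum_i v i 0 ^+ 2.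
Proof. by rewrite sqr_sqrtr // sumr_ge0 // => i _; exact: sqr_ge0. Qed.

Lemma norm_entry_le_l2norm (v : 'cV[R]_K) i : `|v i 0| <= l2norm v.
Proof.
rewrite -sqrtr_sqr ler_sqrt ?sumr_ge0 // => [|j _]; last exact: sqr_ge0.
by rewrite (bigD1 i) //= lerDl sumr_ge0 // => j _; exact: sqr_ge0.
Qed.

Lemma is_derive_softmax_line th i a :
  is_derive (0 : R) 1 (fun h => softmax (h *: delta_mx i 0 + th) a 0)
    (softmax th a 0 * ((a == i)%:R - softmax th i 0)).
Proof.
pose c b : R := (b == i)%:R.
pose E b h := expR (h * c b + th b 0).
have line h b : (h *: delta_mx i 0 + th) b 0 = h * c b + th b 0.
  by rewrite !mxE eqxx andbT.
have -> : (fun h => softmax (h *: delta_mx i 0 + th) a 0)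
          = (fun h => E a h * (\sum_b E b h)^-1).
  by apply/funext => h; rewrite mxE line; under eq_bigr do rewrite line.
have dE b : is_derive (0 : R) 1 (E b) (expR (th b 0) * c b).
  by apply: is_derive_eq (is_derive_expR_affine 0 (c b) (th b 0)) _; rewrite mul0r add0r.
have dZ : is_derive (0 : R) 1 (fun h => \sum_b E b h) (expR (th i 0)).
  apply: is_derive_eq (is_derive_sum_fun dE) _.
  exact: sum_mul_indicator.
have E0 b : E b 0 = expR (th b 0) by rewrite /E mul0r add0r.
have Z0 : 0 < \sum_b E b 0 by under eq_bigr do rewrite E0; exact: sum_expR_gt0.
apply: is_derive_eq (is_deriveM (dE a) (is_deriveV (lt0r_neq0 Z0) dZ)) _.
rewrite !mxE E0; under eq_bigr do rewrite E0.
rewrite /c /GRing.scale /=; field.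
by rewrite lt0r_neq0 // (sum_expR_gt0 th a).
Qed.

Lemma gradPhi_entry eta (r : 'cV[R]_K) th i :
  gradPhi eta r th i 0 =
    softmax th i 0 * (r i 0 - \sum_b softmax th b 0 * r b 0)
    + eta^-1 * (1 - K%:R * softmax th i 0).
Proof.
pose q a h := softmax (h *: delta_mx i 0 + th) a 0.
have q0 a : q a 0 = softmax th a 0 by rewrite /q scale0r add0r.
rewrite mxE; apply: derive_along_line.
have -> : (fun h => Phi eta r (h *: delta_mx i 0 + th))
          = (fun h => \sum_a q a h * r a 0 + eta^-1 * \sum_a ln (q a h)).
  apply/funext => h; rewrite /Phi mxE.
  by under eq_bigr do rewrite mxE.
have dq a := is_derive_softmax_line th i a.
have dl a : is_derive (0 : R) 1 (fun h => ln (q a h))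
                      ((a == i)%:R - softmax th i 0).
  have qa0 : 0 < q a 0 by rewrite q0 softmax_gt0.
  apply: is_derive_eq (is_derive1_comp (is_derive1_ln qa0) (dq a)) _.
  by rewrite q0 mulrA mulVf ?mul1r ?lt0r_neq0 ?softmax_gt0.
have dqr a := is_deriveM (dq a) (is_derive_cst (r a 0) (0 : R) 1).
apply: is_derive_eq (is_deriveD (is_derive_sum_fun dqr)
                                (is_deriveZ eta^-1 (is_derive_sum_fun dl))) _.
congr (_ + _).
  transitivity (\sum_j softmax th j 0 * r j 0 * (j == i)%:R
                - softmax th i 0 * \sum_j softmax th j 0 * r j 0).
    rewrite mulr_sumr -sumrB; apply: eq_bigr => j _.
    by rewrite scaler0 add0r /= /GRing.scale /=; ring.
  by rewrite sum_mul_indicator mulrBr.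
under eq_bigr do rewrite -[_%:R]mul1r.
by rewrite sumrB sum_mul_indicator sumr_const card_ord mulr_natl.
Qed.

End Softmax.

Section BoundedExpectation.
Variables (R : realType) (d : measure_display) (T : measurableType d).
Variable P : probability T R.

Lemma expectation_le_cst (f : T -> R) (M : R) : measurable_fun setT f ->
  (forall w, 0 <= f w) -> (forall w, f w <= M) -> ('E_P[f] <= M%:E)%E.
Proof.
move=> mf f0 fM; rewrite -(expectation_cst P M).
apply: expectation_le => //; last exact: aeW.
by move=> w; exact: le_trans (f0 w) (fM w).
Qed.

Lemma abs_mean_le (X : {RV P >-> R}) (M m : R) :
  (forall w, `|X w| <= M) -> ('E_P[X] = m%:E)%E -> `|m| <= M.
Proof.
move=> XM EX; rewrite -lee_fin -abse_EFin -EX.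
have mX : measurable_fun setT X := measurable_funPT X.
have mnX := measurableT_comp (@measurable_realfun.normr_measurable R setT) mX.
apply: le_trans (expectation_le_cst mnX (fun w => normr_ge0 (X w)) XM).
rewrite !unlock; apply: le_abse_integral => //.
exact/measurable_realfun.measurable_EFinP.
Qed.

End BoundedExpectation.

Section StochasticGradient.
Variables (R : realType) (K : nat) (d : measure_display) (T : measurableType d).
Variable P : probability T R.

Lemma expectation_sqr_l2norm_grad_hat_le (X : {RV P >-> R}) (eta Rmax : R)
    (th : 'cV[R]_K) a :
  0 < eta -> (forall w, `|X w| <= Rmax) ->
  ('E_P[fun w => (l2norm (grad_hat eta th a (X w)) ^+ 2)%R]
    <= (2 * Rmax ^+ 2 * (1 - softmax th a 0) + 4 * Rmax * K%:R / eta
        + 2 * K%:R ^+ 2 / eta ^+ 2)%:E)%E.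
Proof.
move=> eta_gt0 XR; set p := fun b => softmax th b 0.
have p_ge0 b : 0 <= p b := ltW (softmax_gt0 th b).
pose u b := (b == a)%:R - p b; pose v b := 1 - K%:R * p b.
have -> : (fun w => l2norm (grad_hat eta th a (X w)) ^+ 2)
          = (fun w => \sum_b (X w * u b + eta^-1 * v b) ^+ 2)%R.
  by apply/funext => w; rewrite l2norm_sqr; apply: eq_bigr => b _; rewrite grad_hat_entry.
apply: expectation_le_cst => [|w|w].
- apply: measurable_sum => b.
  exact/measurable_realfun.measurable_funX/measurable_realfun.measurable_funD/measurable_cst/
    measurable_realfun.measurable_funM/measurable_cst/measurable_funPT.
- by apply: sumr_ge0 => b _; exact: sqr_ge0.
- exact: (sum_sqr_stoch_grad_le p_ge0 (softmax_sum1 th a)).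
Qed.

End StochasticGradient.

Theorem lemma5p1 (R : realType) (K : nat) (d : measure_display)
  (T : measurableType d) (P : probability T R)
  (Rw : 'I_K -> {RV P >-> R}) (Rmax : R) (r : 'cV[R]_K) (Delta eta alpha : R) :
  (2 <= K)%N ->
  (forall a w, `|Rw a w| <= Rmax) ->
  (forall a, 'E_P[Rw a] = (r a 0)%:E)%E ->
  (forall a a', a != a' -> r a 0 != r a' 0) ->
  (forall a a', a != a' -> Delta <= `|r a 0 - r a' 0|) ->
  (exists a a', a != a' /\ Delta = `|r a 0 - r a' 0|) ->
  0 < eta -> 0 < alpha ->
  forall hist : seq ('I_K * T),
    let th := lbsgb_iterate eta alpha (fun a w => Rw a w) hist in
    let C := 16 * Rmax ^+ 3 * K%:R * Num.sqrt K%:R / Delta ^+ 2 in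
    let b := 2 * K%:R / eta * (4 * K%:R / eta + C) in
    (\sum_(a < K) (softmax th a 0)%:E *
       'E_P[fun w => (l2norm (grad_hat eta th a (Rw a w)) ^+ 2)%R]
     <= (C * l2norm (gradPhi eta r th) + b)%:E)%E.
Proof.
move=> K2 RwR Er r_inj sep [a1 [a2 [a12 DE]]] eta_gt0 _ hist; cbv zeta.
set th := lbsgb_iterate _ _ _ hist; set C := _ / Delta ^+ 2.
have rR a : `|r a 0| <= Rmax := abs_mean_le (RwR a) (Er a).
have D_gt0 : 0 < Delta by rewrite DE normr_gt0 subr_eq0 r_inj.
have DR : Delta <= 2 * Rmax.
  by rewrite DE; apply: le_trans (ler_normB _ _) _; have := rR a1; have := rR a2; lra.
have p_ge0 a : 0 <= softmax th a 0 := ltW (softmax_gt0 th a).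
have p_sum1 := softmax_sum1 th a1.
apply: le_trans (_ : _ <= (\sum_a softmax th a 0 * (2 * Rmax ^+ 2 * (1 - softmax th a 0)
    + 4 * Rmax * K%:R / eta + 2 * K%:R ^+ 2 / eta ^+ 2))%:E)%E _.
  rewrite -sumEFin; apply: lee_sum => a _; rewrite EFinM lee_wpmul2l ?lee_fin //.
  exact: expectation_sqr_l2norm_grad_hat_le.
rewrite lee_fin; apply: (mean_sqr_stoch_grad_le p_ge0 p_sum1 (r := fun a => r a 0)
                                               (Delta := Delta)) => //.
- by move=> a; rewrite -gradPhi_entry norm_entry_le_l2norm.
(* the factor [Num.sqrt K] in [C] is slack: the argument gives the bound without it *)
- have sqrtK_ge1 : 1 <= Num.sqrt (K%:R : R).
    by rewrite -[leLHS]sqrtr1 ler_sqrt // ler1n ltnW.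
  rewrite /C ler_wpM2r ?invr_ge0 ?exprn_ge0 ?(ltW D_gt0) // ler_peMr //.
  by rewrite !mulr_ge0 ?exprn_ge0 //; lra.
Qed.
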